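(* Let $g\ge1$, $n=g+1$, and let $Q$ be the $g\times g$ matrix with $Q_{ii}=2$ and $Q_{ij}=1$ for $i\ne j$ (the tropical Riemann matrix of the genus-$g$ banana graph). The Voronoi polytope $V_Q\subset\mathbb R^g$ has dimension $g$ and exactly $2(2^g-1)$ vertices, namely the set $\bigcup_{k=1}^g[\mathbf k]$, where $[\mathbf k]$ is the set of vectors in $\mathbb R^g$ all of whose entries lie in $\{-\tfrac{k}{g+1},\tfrac{g+1-k}{g+1}\}$ and in which the number of entries equal to $\tfrac{g+1-k}{g+1}$ is either $k$ or $k-1$. The $f$-vector $(f_0,\dots,f_{g-1})$ of $V_Q$ is $f_\ell=\binom{g+1}{\ell}(2^{g+1-\ell}-2)$ for $\ell=0,\dots,g-1$.
   Context: $V_Q=\{\mathbf a\in\mathbb R^g:\ \mathbf a^TQ\mathbf a\le(\mathbf a-\mathbf c)^TQ(\mathbf a-\mathbf c)\ \text{for all }\mathbf c\in\mathbb Z^g\}$. The banana graph of genus $g$ has two vertices $v_1,v_2$ joined by $n=g+1$ edges $e_1,\dots,e_n$; with all edges oriented from $v_2$ to $v_1$ and cycle basis $e_1-e_2,\dots,e_1-e_{g+1}$, the matrix $B\in\mathbb Z^{g\times n}$ has $B_{i,1}=1$, $B_{i,i+1}=-1$ and other entries $0$, and $Q=BB^T$. *)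

From HB Require Import structures.
From mathcomp Require Import all_boot all_order all_algebra.
From mathcomp Require Import classical_sets reals.
Set Implicit Arguments. Unset Strict Implicit. Unset Printing Implicit Defensive.
Import Order.TTheory GRing.Theory Num.Theory.
Local Open Scope ring_scope.
Local Open Scope classical_set_scope.

Definition qform (R : pzRingType) (g : nat) (Q : 'M[R]_g) (a : 'cV[R]_g) : R :=
  \sum_(i < g) \sum_(j < g) a i 0 * Q i j * a j 0.

Definition dotv (R : pzRingType) (g : nat) (u v : 'cV[R]_g) : R :=
  \sum_(i < g) u i 0 * v i 0.

Definition banana_Q (R : pzRingType) (g : nat) : 'M[R]_g :=
  \matrix_(i, j) (if i == j then 2 else 1).

Definition voronoi (R : realType) (g : nat) (Q : 'M[R]_g) : set 'cV[R]_g :=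
  [set a | forall c : 'I_g -> int,
     qform Q a <= qform Q (a - \col_i ((c i)%:~R))].

(* F is a (nonempty) face of P: intersection of P with a supporting hyperplane
   {x | c.x = b} where c.x <= b on P (c = 0, b = 0 gives P itself). *)
Definition is_face (R : realType) (g : nat) (P F : set 'cV[R]_g) : Prop :=
  (exists x, F x) /\
  exists (c : 'cV[R]_g) (b : R),
    (forall x, P x -> dotv c x <= b) /\
    F = [set x | P x /\ dotv c x = b].

Definition aff_indep (R : realType) (g k : nat) (p : 'I_k.+1 -> 'cV[R]_g) : bool :=
  row_free (\matrix_(i < k) (p (lift ord0 i) - p ord0)^T).

Definition has_affdim (R : realType) (g : nat) (S : set 'cV[R]_g) (k : nat) : Prop :=
  (exists p : 'I_k.+1 -> 'cV[R]_g, (forall i, S (p i)) /\ aff_indep p) /\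
  ~ (exists p : 'I_k.+2 -> 'cV[R]_g, (forall i, S (p i)) /\ aff_indep p).

Definition vertices (R : realType) (g : nat) (P : set 'cV[R]_g) : set 'cV[R]_g :=
  [set v | is_face P [set v]].

Definition bracket (R : realType) (g k : nat) : set 'cV[R]_g :=
  [set a | (forall i, a i 0 = - (k%:R / (g.+1)%:R)
                    \/ a i 0 = (g.+1 - k)%:R / (g.+1)%:R) /\
           (#|[set i | a i 0 == (g.+1 - k)%:R / (g.+1)%:R]| = k \/
            #|[set i | a i 0 == (g.+1 - k)%:R / (g.+1)%:R]| = k.-1)].

From HB Require Import structures.
From mathcomp Require Import all_boot all_order all_algebra.
From mathcomp Require Import classical_sets reals.
From mathcomp Require Import ring lra zify.
Import Order.TTheory GRing.Theory Num.Theory.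
Set Implicit Arguments. Unset Strict Implicit. Unset Printing Implicit Defensive.
Local Open Scope ring_scope.
Local Open Scope classical_set_scope.

(* With x = B^T a, i.e. x_1 = a_1 + ... + a_g and x_(i+1) = -a_i, one has
   a^T Q a = |x|^2, and B^T maps Z^g onto the integer vectors of R^(g+1) with
   coordinate sum 0.  Testing the Voronoi inequality against e_p - e_q gives
   x_p - x_q <= 1; conversely 2 y k <= k^2 + k for y in [0,1] and k an integer.
   Hence V_Q is the image of the unit cube [0,1]^(g+1) under the map
   proj y = (mean y - y_(i+1))_i, a left inverse of B^T whose kernel is the
   constants.
   A functional a |-> c.a pulls back along proj to y |-> w.y with sum w = 0; on
   the cube it is maximal exactly on the face {y = 1 on H, y = 0 on L}, where H
   and L are the sets where w > 0 and w < 0, and since sum w = 0 they are both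
   empty or both nonempty.  So the proper faces of V_Q are the images of the cube
   faces with H, L nonempty and disjoint; these images are pairwise distinct and
   have dimension g + 1 - |H| - |L|.  The vertices are the images of the
   indicator vectors of the proper nonempty sets H, i.e. the points of
   [g + 1 - |H|], and an l-dimensional face is given by its l free coordinates
   together with a proper nonempty subset H of the other g + 1 - l. *)

Lemma mul_le_max0 (R : realDomainType) (w y : R) :
  0 <= y <= 1 -> w * y <= Num.max w 0.
Proof. by move=> /andP [y0 y1]; case: (leP w 0) => wp; nra. Qed.

Lemma le_int_sqrD (R : realDomainType) (y : R) (k : int) :
  0 <= y <= 1 -> 2 * y * k%:~R <= k%:~R ^+ 2 + k%:~R.
Proof.
move=> /andP [y0 y1].
have kk1 : 0 <= (k%:~R : R) * (k%:~R + 1).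
  by rewrite -[1]/(1%:~R) -intrD -intrM ler0z; nia.
have kk_1 : 0 <= (k%:~R : R) * (k%:~R - 1).
  by rewrite -[1]/(1%:~R) -intrB -intrM ler0z; nia.
by case: (lerP 0 (k%:~R : R)) => k0; nra.
Qed.

Lemma subr1_neq (R : nzRingType) (x : R) : (x - 1 == x) = false.
Proof. by apply/negbTE; rewrite -subr_eq0 addrAC subrr add0r oppr_eq0 oner_eq0. Qed.

Lemma sum_eq0_pos_neg (R : realDomainType) (I : finType) (w : I -> R) :
  \sum_i w i = 0 ->
  ([set i | 0 < w i]%SET == finset.set0) = ([set i | w i < 0]%SET == finset.set0).
Proof.
move=> w0.
have all0 (v : I -> R) : \sum_i v i = 0 -> (forall i, 0 <= v i) -> forall i, v i = 0.
  by move=> v0 vge0 i; apply: (psumr_eq0P (P := predT)) => // j _; apply: vge0.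
apply/eqP/eqP => /setP empty; apply/setP => i; rewrite !inE.
  have wle0 j : 0 <= - w j.
    by move: (empty j); rewrite !inE oppr_ge0 => /negbT; rewrite -leNgt.
  by rewrite -oppr_gt0 (all0 _ _ wle0) ?ltxx // sumrN w0 oppr0.
have wge0 j : 0 <= w j by move: (empty j); rewrite !inE => /negbT; rewrite -leNgt.
by rewrite (all0 _ w0 wge0) ltxx.
Qed.

Lemma card_mkset (T : finType) (P : pred T) : #|[set x | P x]| = #|[set x | P x]%SET|.
Proof. by apply: eq_card => x; rewrite !inE; apply/idP/idP; rewrite in_setE. Qed.

Lemma card_ord_recl n (P : pred 'I_n.+1) :
  #|[set p | P p]%SET| = (P ord0 + #|[set i : 'I_n | P (lift ord0 i)]%SET|)%N.
Proof.
rewrite -!sum1_card !big_mkcond big_ord_recl /= inE; congr (_ + _)%N.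
by rewrite [in RHS]big_mkcond; apply: eq_bigr => i _; rewrite !inE.
Qed.

Lemma enum_image (T : Type) (I : finType) (A : {set I}) (h : I -> T) N :
  #|A| = N -> {in A &, injective h} ->
  exists f : 'I_N -> T, injective f /\ range f = h @` [set` A].
Proof.
move=> <- hinj; exists (h \o enum_val); split.
  by move=> i j /(hinj _ _ (enum_valP i) (enum_valP j)) /enum_val_inj.
apply/seteqP; split=> [_ [i _ <-] | _ [x xA <-]].
  by exists (enum_val i); first exact: enum_valP.
by exists (enum_rank_in xA x) => //=; rewrite enum_rankK_in.
Qed.

Section NontrivialSubsets.
Variable T : finType.
Implicit Types A B : {set T}.

Definition nontrivial_subsets A : {set {set T}} :=
  [set B : {set T} | [&& B \subset A, B != finset.set0 & A :\: B != finset.set0]]%SET.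

Lemma nontrivial_subsetsT B :
  (B \in nontrivial_subsets [set: T]%SET) = (0 < #|B| < #|T|)%N.
Proof.
rewrite inE finset.subsetT /= finset.setTD -!card_gt0.
by rewrite -(cardsC B) -{3}[#|B|]addn0 ltn_add2l.
Qed.

Lemma card_nontrivial_subsets A :
  A != finset.set0 -> #|nontrivial_subsets A| = (2 ^ #|A| - 2)%N.
Proof.
move=> AN.
have -> : nontrivial_subsets A = (powerset A :\: [set finset.set0; A])%SET.
  apply/setP => B; rewrite !inE negb_or finset.setD_eq0.
  by case BA: (B \subset A); rewrite ?andbF //= [B == A]finset.eqEsubset BA andbT.
rewrite cardsD card_powerset (finset.setIidPr _) ?cards2 1?eq_sym ?(negbTE AN) //.
by apply/fintype.subsetP => B; rewrite !inE => /orP [] /eqP ->; rewrite ?finset.sub0set.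
Qed.

Lemma nontrivial_subsetsP A B : B \in nontrivial_subsets A ->
  [/\ B != finset.set0, A :\: B != finset.set0, [disjoint B & A :\: B]%B
     & B :|: (A :\: B) = A].
Proof.
rewrite inE => /and3P [BA BN ABN]; split=> //.
  by apply/pred0P => x /=; rewrite !inE; case: (x \in B).
apply/setP => x; rewrite !inE; case xB: (x \in B) => //=.
by rewrite (fintype.subsetP BA x xB).
Qed.

Definition face_index (l : nat) : {set {set T} * {set T}} :=
  [set x : {set T} * {set T} |
     (#|x.1| == l) && (x.2 \in nontrivial_subsets (~: x.1))]%SET.

Lemma in_face_index l x :
  (x \in face_index l) = (#|x.1| == l) && (x.2 \in nontrivial_subsets (~: x.1)).
Proof. by rewrite finset.in_set. Qed.

Lemma card_face_index l :
  (l < #|T|)%N -> #|face_index l| = ('C(#|T|, l) * (2 ^ (#|T| - l) - 2))%N.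
Proof.
move=> lT; rewrite -sum1_card (eq_bigl _ _ (in_face_index l)).
rewrite -(pair_big_dep (fun M : {set T} => #|M| == l)
           (fun M B => B \in nontrivial_subsets (~: M)) (fun _ _ => 1%N)) /=.
rewrite (eq_bigr (fun _ => 2 ^ (#|T| - l) - 2)%N) => [|M /eqP Ml].
  by rewrite sum_nat_cond_const card_draws.
have CM : #|~: M| = (#|T| - l)%N by rewrite cardsCs finset.setCK -Ml.
by rewrite sum1_card -CM card_nontrivial_subsets // -card_gt0 CM; lia.
Qed.

End NontrivialSubsets.

Section AffineDimension.
Variables (R : realType) (g : nat).
Implicit Types (S : set 'cV[R]_g) (x : 'cV[R]_g).

Lemma row_free_rowsub m n p (f : 'I_m -> 'I_n) (A : 'M[R]_(n, p)) :
  injective f -> row_free A -> row_free (rowsub f A).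
Proof.
move=> finj Afree; apply/inj_row_free => v; rewrite rowsubE mulmxA => vfA.
have vf0 : v *m rowsub f 1%:M = 0 by apply: (row_free_inj Afree); rewrite mul0mx.
apply/rowP => i; move/rowP/(_ (f i)): vf0; rewrite !mxE.
rewrite (bigD1 i) //= big1 => [|j /negbTE ji]; rewrite !mxE ?eqxx ?mulr1 ?addr0 //.
by rewrite (inj_eq finj) ji mulr0.
Qed.

Lemma aff_indepE k (p : 'I_k.+1 -> 'cV[R]_g) (b : 'I_k -> 'cV[R]_g) :
  (forall r, p (lift ord0 r) = p ord0 + b r) ->
  aff_indep p = row_free (\matrix_r (b r)^T).
Proof.
move=> pE; rewrite /aff_indep; congr row_free.
by apply/row_matrixP => r; rewrite !rowK pE (addrC (p ord0)) addrK.
Qed.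

Lemma aff_indep_leq k (p : 'I_k.+1 -> 'cV[R]_g) : aff_indep p -> (k <= g)%N.
Proof. by move=> /eqP <-; apply: rank_leq_col. Qed.

Lemma aff_indep_widen k l (kl : (k <= l)%N) (p : 'I_l.+1 -> 'cV[R]_g) :
  aff_indep p -> aff_indep (p \o @widen_ord k.+1 l.+1 kl).
Proof.
have liftW (i : 'I_k) :
    @widen_ord k.+1 l.+1 kl (lift ord0 i) = lift ord0 (widen_ord kl i).
  by apply: val_inj.
have widen_inj : injective (widen_ord kl) by move=> i j /(congr1 val) /= /val_inj.
move=> /(row_free_rowsub widen_inj) free.
rewrite /aff_indep; congr (row_free _): free.
apply/row_matrixP => i; rewrite row_rowsub !rowK /= liftW.
by congr ((_ - p _)^T); apply: val_inj.
Qed.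

Lemma has_affdim_uniq S k l : has_affdim S k -> has_affdim S l -> k = l.
Proof.
wlog kl : k l / (k <= l)%N.
  by move=> sym Sk Sl; case: (leqP k l) => [|/ltnW] kl; [exact: sym | exact/esym/sym].
move=> [_ noSk] [[p [pS pfree]] _]; apply/eqP; rewrite eqn_leq kl leqNgt.
apply/negP => lt_kl; apply: noSk.
exists (p \o @widen_ord k.+2 l.+1 lt_kl).
by split=> [i|]; [exact: pS | exact: aff_indep_widen].
Qed.

Lemma no_aff_indep_in_span S m k x (b : 'I_m -> 'cV[R]_g) :
  (forall y, S y -> exists t : 'I_m -> R, y = x + \sum_r t r *: b r) -> (m < k)%N ->
  ~ exists p : 'I_k.+1 -> 'cV[R]_g, (forall i, S (p i)) /\ aff_indep p.
Proof.
move=> Sspan mk [p [pS pfree]].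
have diff_span : (\matrix_(i < k) (p (lift ord0 i) - p ord0)^T <= \matrix_r (b r)^T)%MS.
  apply/row_subP => i; rewrite rowK.
  have [t1 ->] := Sspan _ (pS (lift ord0 i)); have [t0 ->] := Sspan _ (pS ord0).
  apply/submxP; exists (\row_r (t1 r - t0 r)); apply/rowP => j.
  rewrite !mxE !summxE opprD addrACA subrr add0r -sumrB.
  by apply: eq_bigr => r _; rewrite !mxE mulrBl.
have := mxrankS diff_span; rewrite (eqP pfree) => /leq_trans/(_ (rank_leq_row _)).
by rewrite leqNgt mk.
Qed.

Lemma has_affdim_set1 x : has_affdim [set x] 0.
Proof.
split; first by exists (fun=> x); split=> //; rewrite /aff_indep -row_leq_rank.
apply: (no_aff_indep_in_span (b := fun _ : 'I_0 => 0) (x := x)) => // y ->.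
by exists (fun=> 0); rewrite big_ord0 addr0.
Qed.

End AffineDimension.

Section CubeFaces.
Variables (R : realType) (n : nat).
Implicit Types (y w : 'I_n -> R) (A H L : {set 'I_n}).

Definition cube : set ('I_n -> R) := [set y | forall p, 0 <= y p <= 1].

Definition cube_face H L : set ('I_n -> R) :=
  [set y | cube y /\ (forall p, p \in H -> y p = 1) /\ (forall p, p \in L -> y p = 0)].

Definition indic H p : R := (p \in H)%:R.

Lemma cube_face0 : cube_face finset.set0 finset.set0 = cube.
Proof. by apply/seteqP; split=> [y []|y yC] //; split=> //; split=> p; rewrite inE. Qed.

Lemma disjoint_compl H : [disjoint H & ~: H]%B.
Proof. by apply/pred0P => p /=; rewrite inE andbN. Qed.

Lemma sum_indic H : \sum_p indic H p = #|H|%:R.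
Proof. by rewrite /indic -natr_sum -sum1_card [in RHS]big_mkcond. Qed.

Lemma indic_cube H : cube (indic H).
Proof. by move=> p; rewrite /indic; case: (p \in H); rewrite ?lexx ?ler01. Qed.

Lemma indic_cube_face A H L :
  {subset H <= A} -> [disjoint A & L]%B -> cube_face H L (indic A).
Proof.
move=> HA dAL; split; first exact: indic_cube.
by split=> p pP; rewrite /indic; [rewrite HA | rewrite (disjointFl dAL pP)].
Qed.

Lemma cube_face_compl H y : cube_face H (~: H) y -> y = indic H.
Proof.
move=> [_ [y1 y0]]; apply: boolp.funext => p; rewrite /indic.
by case pH: (p \in H); [exact: y1 | apply: y0; rewrite inE pH].
Qed.

Lemma cube_face_subset H L H' L' : [disjoint H' & L']%B ->
  cube_face H' L' `<=` cube_face H L -> {subset H <= H'} /\ {subset L <= L'}.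
Proof.
move=> dHL' sub; split=> p pP; apply/negPn/negP => pN.
  have [_ [y1 _]] := sub _ (indic_cube_face (fun q (qH : q \in H') => qH) dHL').
  by move: (y1 p pP); rewrite /indic (negbTE pN) => /eqP; rewrite eq_sym oner_eq0.
have H'L'C : {subset H' <= ~: L'} by move=> q qH; rewrite inE (disjointFr dHL' qH).
have dL'C : [disjoint ~: L' & L']%B by rewrite disjoint_sym disjoint_compl.
have [_ [_ y0]] := sub _ (indic_cube_face H'L'C dL'C).
by move: (y0 p pP); rewrite /indic inE pN => /eqP; rewrite oner_eq0.
Qed.

Lemma cube_linear_le w y :
  cube y -> \sum_p w p * y p <= \sum_p Num.max (w p) 0.
Proof. by move=> yC; apply: ler_sum => p _; apply/mul_le_max0/yC. Qed.

Lemma cube_face_argmax w y :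
  cube_face [set p | 0 < w p]%SET [set p | w p < 0]%SET y <->
  cube y /\ \sum_p w p * y p = \sum_p Num.max (w p) 0.
Proof.
split=> [[yC [y1 y0]]|[yC yS]].
  split=> //; apply: eq_bigr => p _.
  case: (ltgtP (w p) 0) => wp; rewrite ?max_l ?max_r ?ltW //.
  - by rewrite y0 ?mulr0 // inE.
  - by rewrite y1 ?mulr1 // inE.
  - by rewrite wp mul0r.
have gap0 p : Num.max (w p) 0 - w p * y p = 0.
  apply: (psumr_eq0P (P := predT) (F := fun p => Num.max (w p) 0 - w p * y p)) => //.
    by move=> q _; rewrite subr_ge0 mul_le_max0.
  by rewrite sumrB yS subrr.
split=> //; split=> p; rewrite inE => wp; move/eqP: (gap0 p).
  by rewrite max_l ?ltW // -{1}[w p]mulr1 -mulrBr mulf_eq0 gt_eqF //= subr_eq0 => /eqP.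
by rewrite max_r ?ltW // sub0r oppr_eq0 mulf_eq0 lt_eqF //= => /eqP.
Qed.

End CubeFaces.

Arguments cube {R n}.
Arguments cube_face {R n}.
Arguments indic {R n}.

Section EdgeCoordinates.
Variables (R : realType) (g : nat).
Implicit Types (a c : 'cV[R]_g) (p q : 'I_g.+1).

(* [edge_coords a] is B^T a, the edge e_1 being ord0 and e_(i+2) being
   lift ord0 i; as Q = B B^T, a^T Q a is the squared norm of B^T a. *)
Definition edge_coords a p : R :=
  if unlift ord0 p is Some i then - a i 0 else \sum_i a i 0.

Lemma edge_coords0 a : edge_coords a ord0 = \sum_i a i 0.
Proof. by rewrite /edge_coords unlift_none. Qed.

Lemma edge_coords_lift a i : edge_coords a (lift ord0 i) = - a i 0.
Proof. by rewrite /edge_coords liftK. Qed.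

Lemma sum_edge_coords a : \sum_p edge_coords a p = 0.
Proof.
rewrite big_ord_recl edge_coords0.
by under [X in _ + X]eq_bigr => ? _ do rewrite edge_coords_lift; rewrite sumrN subrr.
Qed.

Lemma edge_coordsB a c p :
  edge_coords (a - c) p = edge_coords a p - edge_coords c p.
Proof.
rewrite /edge_coords; case: unlift => [i|]; first by rewrite !mxE opprD.
by under eq_bigr => ? _ do rewrite !mxE; rewrite sumrB.
Qed.

Lemma qform_banana a : qform (banana_Q R g) a = \sum_p edge_coords a p ^+ 2.
Proof.
have row_sum i : \sum_j a i 0 * banana_Q R g i j * a j 0 =
                 a i 0 * \sum_j a j 0 + a i 0 ^+ 2.
  rewrite mulr_sumr (bigD1 i) //= [X in _ = X + _](bigD1 i) //= mxE eqxx.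
  under eq_bigr => j /negbTE ji do rewrite mxE eq_sym ji mulr1.
  ring.
rewrite /qform big_ord_recl edge_coords0.
under eq_bigr => ? _ do rewrite row_sum.
under [X in _ = _ + X]eq_bigr => ? _ do rewrite edge_coords_lift sqrrN.
by rewrite big_split /= -mulr_suml expr2.
Qed.

Lemma edge_coords_int (c : 'I_g -> int) p :
  exists k : int, edge_coords (\col_i (c i)%:~R) p = k%:~R.
Proof.
case: (unliftP ord0 p) => [i ->|->].
  by exists (- c i); rewrite edge_coords_lift mxE intrN.
exists (\sum_i c i); rewrite edge_coords0 rmorph_sum /=.
by under eq_bigr => ? _ do rewrite mxE.
Qed.

Lemma edge_coords_delta p q : exists c : 'I_g -> int,
  forall r, edge_coords (\col_i (c i)%:~R) r = (r == p)%:R - (r == q)%:R.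
Proof.
exists (fun i => (lift ord0 i == q)%:Z - (lift ord0 i == p)%:Z) => r.
have col_delta (i : 'I_g) : ((lift ord0 i == q)%:Z - (lift ord0 i == p)%:Z)%:~R =
                   (lift ord0 i == q)%:R - (lift ord0 i == p)%:R :> R.
  by rewrite intrB !pmulrn.
case: (unliftP ord0 r) => [i ->|->].
  by rewrite edge_coords_lift mxE col_delta opprB.
rewrite edge_coords0; under eq_bigr => ? _ do rewrite mxE col_delta.
have sum_delta (s : 'I_g.+1) : \sum_i (lift ord0 i == s)%:R = 1 - (ord0 == s)%:R :> R.
  have : \sum_(t < g.+1) (t == s)%:R = 1 :> R.
    by rewrite (bigD1 s) //= eqxx big1 ?addr0 // => t /negbTE ->.
  rewrite big_ord_recl; lra.
by rewrite sumrB !sum_delta; lra.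
Qed.

End EdgeCoordinates.

Section Projection.
Variables (R : realType) (g : nat).
Implicit Types (y z : 'I_g.+1 -> R) (a : 'cV[R]_g).

Definition mean y : R := (\sum_p y p) / g.+1%:R.

Definition proj y : 'cV[R]_g := \col_i (mean y - y (lift ord0 i)).

Lemma edge_coords_proj y p : edge_coords (proj y) p = y p - mean y.
Proof.
have sum_y : \sum_p y p = g.+1%:R * mean y by rewrite mulrC divfK ?pnatr_eq0.
case: (unliftP ord0 p) => [i ->|->]; first by rewrite edge_coords_lift mxE opprB.
rewrite edge_coords0; under eq_bigr => i _ do rewrite mxE.
move: sum_y; rewrite big_ord_recl sumrB sumr_const card_ord -mulr_natl -natr1.
lra.
Qed.

Lemma proj_edge_coords a : proj (edge_coords a) = a.
Proof.
have mean0 : mean (edge_coords a) = 0 by rewrite /mean sum_edge_coords mul0r.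
by apply/matrixP => i j; rewrite ord1 mxE mean0 edge_coords_lift sub0r opprK.
Qed.

Lemma proj_eq y z : proj y = proj z -> forall p, y p = z p + (mean y - mean z).
Proof.
by move=> yz p; have := edge_coords_proj z p; rewrite -yz edge_coords_proj; lra.
Qed.

Lemma proj_shift y c : proj (fun p => y p + c) = proj y.
Proof.
apply/matrixP => i j; rewrite !mxE /mean big_split sumr_const card_ord /=.
by rewrite mulrDl -[c *+ _]mulr_natr mulfK ?pnatr_eq0 //; ring.
Qed.

Lemma proj_eq0 y : proj y = 0 -> forall p, y p = mean y.
Proof.
move=> y0 p; have := edge_coords_proj y p; rewrite y0 /edge_coords.
case: unlift => [i|]; first by rewrite mxE oppr0; lra.
by rewrite big1 => [|i _]; rewrite ?mxE //; lra.
Qed.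

Lemma projD y z : proj (fun p => y p + z p) = proj y + proj z.
Proof. by apply/matrixP => i j; rewrite !mxE /mean big_split /= mulrDl; ring. Qed.

Lemma proj_sum m (t : 'I_m -> R) (e : 'I_m -> 'I_g.+1 -> R) :
  proj (fun p => \sum_r t r * e r p) = \sum_r t r *: proj (e r).
Proof.
apply/matrixP => i j; rewrite !mxE summxE /mean exchange_big /=.
under [RHS]eq_bigr => r _ do rewrite !mxE /mean mulrBr mulrA.
rewrite sumrB -mulr_suml; congr (_ / _ - _).
by apply: eq_bigr => r _; rewrite mulr_sumr.
Qed.

End Projection.

Arguments mean {R g}.
Arguments proj {R g}.

Section VoronoiCell.
Variables (R : realType) (g : nat).
Implicit Types (a : 'cV[R]_g).

Lemma voronoi_bananaP a : voronoi (banana_Q R g) a <->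
  forall c : 'I_g -> int, let z := edge_coords (\col_i (c i)%:~R : 'cV[R]_g) in
    2 * \sum_p edge_coords a p * z p <= \sum_p z p ^+ 2.
Proof.
have expand c : qform (banana_Q R g) (a - c) = qform (banana_Q R g) a
    - 2 * \sum_p edge_coords a p * edge_coords c p + \sum_p edge_coords c p ^+ 2.
  rewrite !qform_banana mulr_sumr -sumrB -big_split /=.
  by apply: eq_bigr => p _; rewrite edge_coordsB; ring.
by split=> aV c; have := aV c; rewrite /= expand; lra.
Qed.

Lemma voronoi_edge_coords_diff a p q :
  voronoi (banana_Q R g) a -> edge_coords a p - edge_coords a q <= 1.
Proof.
move=> /voronoi_bananaP aV; have [->|pq] := eqVneq p q; first by rewrite subrr ler01.
have [c cE] := edge_coords_delta R p q; move: (aV c) => /=.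
have sum_delta (F : 'I_g.+1 -> R) s : \sum_r F r * (r == s)%:R = F s.
  by rewrite (bigD1 s) //= eqxx mulr1 big1 ?addr0 // => r /negbTE ->; rewrite mulr0.
under eq_bigr => r _ do rewrite cE mulrBr.
under [X in _ <= X]eq_bigr => r _ do rewrite cE expr2 mulrBr.
have qp : (q == p) = false by rewrite eq_sym (negbTE pq).
rewrite !sumrB !sum_delta !eqxx (negbTE pq) qp /=; lra.
Qed.

Lemma voronoi_proj_cube : voronoi (banana_Q R g) = proj @` cube.
Proof.
apply/seteqP; split=> [a aV | _ [y yC <-]].
  set x := edge_coords a.
  have [q _ qmin] := @arg_minP _ _ _ ord0 predT x isT.
  exists (fun p => x p - x q); last by rewrite proj_shift proj_edge_coords.
  by move=> p; rewrite subr_ge0 qmin //= voronoi_edge_coords_diff.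
apply/voronoi_bananaP => c /=; set z := edge_coords (\col_i _).
have z0 : \sum_p z p = 0 by apply: sum_edge_coords.
have -> : \sum_p edge_coords (proj y) p * z p = \sum_p y p * z p.
  under eq_bigr => p _ do rewrite edge_coords_proj mulrBl.
  by rewrite sumrB -mulr_sumr z0 mulr0 subr0.
suff : 2 * \sum_p y p * z p <= \sum_p (z p ^+ 2 + z p).
  by rewrite big_split /= z0 addr0.
rewrite mulr_sumr; apply: ler_sum => p _.
have [k zk] := edge_coords_int R c p.
by rewrite /z zk mulrA le_int_sqrD.
Qed.

End VoronoiCell.

Section ProjCubeFaces.
Variables (R : realType) (g : nat).
Implicit Types (c x : 'cV[R]_g) (F : set 'cV[R]_g) (y w : 'I_g.+1 -> R).
Implicit Types (H L : {set 'I_g.+1}).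

Local Notation proj_face H L := (@proj R g @` cube_face H L).

Definition proj_adjoint c p : R :=
  (\sum_i c i 0) / g.+1%:R - (if unlift ord0 p is Some i then c i 0 else 0).

Lemma proj_adjoint0 c : proj_adjoint c ord0 = (\sum_i c i 0) / g.+1%:R.
Proof. by rewrite /proj_adjoint unlift_none subr0. Qed.

Lemma proj_adjoint_lift c i :
  proj_adjoint c (lift ord0 i) = (\sum_i c i 0) / g.+1%:R - c i 0.
Proof. by rewrite /proj_adjoint liftK. Qed.

Lemma dotv_proj c y : dotv c (proj y) = \sum_p proj_adjoint c p * y p.
Proof.
rewrite /dotv big_ord_recl.
under [in RHS]eq_bigr => i _ do rewrite proj_adjoint_lift mulrBl.
under [in LHS]eq_bigr => i _ do rewrite mxE mulrBr.
rewrite proj_adjoint0 !sumrB -mulr_suml -mulr_sumr /mean big_ord_recl; ring.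
Qed.

Lemma sum_proj_adjoint c : \sum_p proj_adjoint c p = 0.
Proof.
rewrite big_ord_recl.
under eq_bigr => i _ do rewrite proj_adjoint_lift.
rewrite proj_adjoint0 sumrB sumr_const card_ord addrA -mulrS -[_ *+ g.+1]mulr_natr.
by rewrite mulfVK ?pnatr_eq0 // subrr.
Qed.

Lemma proj_adjoint_surj w :
  \sum_p w p = 0 -> proj_adjoint (\col_i (w ord0 - w (lift ord0 i))) =1 w.
Proof.
move=> w0; have sum_c : \sum_i (\col_i (w ord0 - w (lift ord0 i)) : 'cV[R]_g) i 0
                        = g.+1%:R * w ord0.
  under eq_bigr => i _ do rewrite mxE.
  move: w0; rewrite big_ord_recl sumrB sumr_const card_ord -mulr_natl -natr1; lra.
have mean_c : g.+1%:R * w ord0 / g.+1%:R = w ord0 by rewrite mulrC mulKf ?pnatr_eq0.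
move=> p; case: (unliftP ord0 p) => [i ->|->].
  by rewrite proj_adjoint_lift sum_c mean_c mxE opprB addrC subrK.
by rewrite proj_adjoint0 sum_c mean_c.
Qed.

Lemma dotv_proj_cube_le c x :
  (proj @` cube) x -> dotv c x <= \sum_p Num.max (proj_adjoint c p) 0.
Proof. by move=> [y yC <-]; rewrite dotv_proj cube_linear_le. Qed.

Lemma proj_cube_argmax c :
  [set x | (proj @` cube) x /\ dotv c x = \sum_p Num.max (proj_adjoint c p) 0] =
  proj_face [set p | 0 < proj_adjoint c p]%SET [set p | proj_adjoint c p < 0]%SET.
Proof.
apply/seteqP; split=> [x [[y yC <-]] | _ [y /cube_face_argmax [yC yS] <-]].
  by rewrite dotv_proj => yS; exists y => //; apply/cube_face_argmax.
by split; [exists y | rewrite dotv_proj].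
Qed.

Lemma is_face_proj_cube_cases F : is_face (proj @` cube) F ->
  F = proj @` cube \/ exists H L, [/\ H != finset.set0, L != finset.set0,
                                     [disjoint H & L]%B & F = proj_face H L].
Proof.
move=> [[x0 Fx0] [c [b [le_b FE]]]].
set H := [set p | 0 < proj_adjoint c p]%SET.
set L := [set p | proj_adjoint c p < 0]%SET.
have dHL : [disjoint H & L]%B.
  by apply/pred0P => p /=; rewrite !inE; case: ltgtP.
have bE : b = \sum_p Num.max (proj_adjoint c p) 0.
  apply/le_anti/andP; split.
    by move: Fx0; rewrite FE => -[x0P <-]; exact: dotv_proj_cube_le.
  have /cube_face_argmax [HC <-] := indic_cube_face R (fun p (pH : p \in H) => pH) dHL.
  by rewrite -dotv_proj; apply: le_b; exists (indic H).
rewrite FE bE proj_cube_argmax -/H -/L.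
have HL0 := sum_eq0_pos_neg (sum_proj_adjoint c); rewrite -/H -/L in HL0.
have [H0|HN] := eqVneq H finset.set0.
  by left; move: HL0; rewrite H0 eqxx => /esym/eqP ->; rewrite cube_face0.
by right; exists H, L; split; rewrite // -HL0.
Qed.

Lemma is_face_proj_cube_face H L :
  H != finset.set0 -> L != finset.set0 -> [disjoint H & L]%B ->
  is_face (proj @` cube) (proj_face H L).
Proof.
move=> HN LN dHL.
(* [w] is positive exactly on H, negative exactly on L and sums to 0, so it is
   [proj_adjoint c] for the [c] below. *)
pose w p : R := #|L|%:R * indic H p - #|H|%:R * indic L p.
have w0 : \sum_p w p = 0 by rewrite sumrB -!mulr_sumr !sum_indic mulrC subrr.
pose c : 'cV[R]_g := \col_i (w ord0 - w (lift ord0 i)).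
have w_sign p : w p = if p \in H then #|L|%:R else if p \in L then - #|H|%:R else 0.
  rewrite /w /indic; case pH: (p \in H).
    by rewrite (disjointFr dHL pH) mulr1 mulr0 subr0.
  by case: (p \in L); rewrite mulr0 ?mulr1 ?mulr0 ?sub0r ?subr0 ?oppr0.
have [Hgt0 Lgt0] : (0 < #|H|)%N /\ (0 < #|L|)%N by rewrite !card_gt0.
have posE : [set p | 0 < proj_adjoint c p]%SET = H.
  apply/setP => p; rewrite inE proj_adjoint_surj // w_sign.
  case: ifP => _; first by rewrite ltr0n.
  by case: ifP => _; rewrite ?ltxx // oppr_gt0 ltNge ler0n.
have negE : [set p | proj_adjoint c p < 0]%SET = L.
  apply/setP => p; rewrite inE proj_adjoint_surj // w_sign.
  case: ifP => [pH|_]; first by rewrite ltNge ler0n (disjointFr dHL pH).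
  by case: ifP => _; rewrite ?ltxx // oppr_lt0 ltr0n.
split; first by exists (proj (indic H)), (indic H) => //; exact: indic_cube_face.
exists c, (\sum_p Num.max (proj_adjoint c p) 0); split; first exact: dotv_proj_cube_le.
by rewrite proj_cube_argmax posE negE.
Qed.

Lemma proj_face_compl H : proj_face H (~: H) = [set proj (indic H)].
Proof.
apply/seteqP; split=> [_ [y /cube_face_compl -> <-] // | _ ->].
by exists (indic H) => //; apply: indic_cube_face (disjoint_compl H).
Qed.

(* [proj] is injective on the cube points that take both values 0 and 1. *)
Lemma proj_face_subset H L H' L' : H != finset.set0 -> L != finset.set0 ->
  proj_face H L `<=` proj_face H' L' ->
  cube_face H L `<=` (cube_face H' L' : set ('I_g.+1 -> R)).
Proof.
move=> /set0Pn [p1 p1H] /set0Pn [p0 p0L] sub y yF.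
have /sub [y' y'F /proj_eq y'E] : proj_face H L (proj y) by exists y.
have [[y'C _] [_ [y1 y0]]] := (y'F, yF).
have d0 : mean y' - mean y = 0.
  have /andP [y'p0 _] := y'C p0; have /andP [_ y'p1] := y'C p1.
  move: (y'E p0) (y'E p1); rewrite (y0 _ p0L) (y1 _ p1H); lra.
suff -> : y = y' by [].
by apply/boolp.funext => p; rewrite y'E d0 addr0.
Qed.

Lemma proj_face_inj H L H' L' :
  H != finset.set0 -> L != finset.set0 -> H' != finset.set0 -> L' != finset.set0 ->
  [disjoint H & L]%B -> [disjoint H' & L']%B ->
  proj_face H L = proj_face H' L' -> H = H' /\ L = L'.
Proof.
move=> HN LN H'N L'N dHL dHL' E.
have [sub sub'] :
    proj_face H L `<=` proj_face H' L' /\ proj_face H' L' `<=` proj_face H L.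
  by rewrite E; split=> x.
have [H'H L'L] := cube_face_subset dHL (proj_face_subset HN LN sub).
have [HH' LL'] := cube_face_subset dHL' (proj_face_subset H'N L'N sub').
by split; apply/setP => p; apply/idP/idP; by [move/HH' | move/H'H | move/LL' | move/L'L].
Qed.

End ProjCubeFaces.

Section ProjFaceDimension.
Variables (R : realType) (g : nat).
Implicit Types (H L : {set 'I_g.+1}) (y : 'I_g.+1 -> R).

Local Notation proj_face H L := (@proj R g @` cube_face H L).

Lemma row_free_proj_indic1 m (q : 'I_m -> 'I_g.+1) p0 :
  injective q -> (forall r, q r != p0) ->
  row_free (\matrix_r (@proj R g (indic [set q r]))^T).
Proof.
move=> qinj qp0; apply/inj_row_free => v vM0.
pose z p := \sum_r v 0 r * indic [set q r] p.
have /proj_eq0 zconst : proj z = 0.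
  apply: trmx_inj; rewrite trmx0 -vM0 mulmx_sum_row proj_sum linear_sum /=.
  by apply: eq_bigr => r _; rewrite rowK linearZ.
have z_q r : z (q r) = v 0 r.
  rewrite /z (bigD1 r) //= /indic inE eqxx mulr1 big1 ?addr0 // => r' r'r.
  by rewrite inE (inj_eq qinj) eq_sym (negbTE r'r) mulr0.
have z_p0 : z p0 = 0.
  by rewrite /z big1 // => r _; rewrite /indic inE eq_sym (negbTE (qp0 r)) mulr0.
by apply/rowP => r; rewrite mxE -z_q zconst -(zconst p0) z_p0.
Qed.

Lemma proj_face_aff_indep H L m (q : 'I_m -> 'I_g.+1) p0 :
  [disjoint H & L]%B -> injective q -> (forall r, q r != p0) ->
  (forall r, q r \notin H :|: L) ->
  exists p : 'I_m.+1 -> 'cV[R]_g, (forall i, proj_face H L (p i)) /\ aff_indep p.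
Proof.
move=> dHL qinj qp0 qHL.
pose p i : 'cV[R]_g := proj (indic (if unlift ord0 i is Some r then q r |: H else H)).
have indicU1 r : indic (q r |: H) = (fun s => indic H s + indic [set q r] s) :> (_ -> R).
  apply/boolp.funext => s; rewrite /indic !inE.
  have [->|_] := eqVneq s (q r); last by rewrite addr0.
  by move: (qHL r); rewrite !inE negb_or => /andP [/negbTE -> _]; rewrite add0r.
exists p; split=> [i|].
  exists (indic (if unlift ord0 i is Some r then q r |: H else H)) => //.
  case: unlift => [r|]; last exact: indic_cube_face dHL.
  apply: indic_cube_face => [s sH|]; first by rewrite !inE sH orbT.
  apply/pred0P => s /=; rewrite !inE; have [->|_] := eqVneq s (q r).
    by move: (qHL r); rewrite !inE negb_or => /andP [_ /negbTE ->]; rewrite andbF.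
  by have /pred0P/(_ s) := dHL.
rewrite (aff_indepE (b := fun r => proj (indic [set q r]))); last first.
  by move=> r; rewrite /p liftK unlift_none indicU1 projD.
exact: row_free_proj_indic1 qinj qp0.
Qed.

Lemma proj_face_span H L y : cube_face H L y ->
  proj y = proj (indic H) + \sum_(r < #|~: (H :|: L)|)
                               y (enum_val r) *: proj (indic [set enum_val r]).
Proof.
move=> [_ [y1 y0]]; set M := ~: (H :|: L).
have sum_at s : \sum_(r < #|M|) y (enum_val r) * indic [set enum_val r] s =
                (s \in M)%:R * y s.
  case: (boolP (s \in M)) => sM; last first.
    rewrite mul0r big1 // => r _; rewrite /indic inE.
    by case: eqP => [sr|]; [move: (enum_valP r); rewrite -sr (negbTE sM) | rewrite mulr0].
  rewrite (bigD1 (enum_rank_in sM s)) //= enum_rankK_in // /indic inE eqxx mulr1 mul1r.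
  rewrite big1 ?addr0 // => r rs; rewrite inE -{1}(enum_rankK_in sM sM).
  by rewrite (inj_eq enum_val_inj) eq_sym (negbTE rs) mulr0.
have yE : y = (fun s => indic H s +
                 \sum_(r < #|M|) y (enum_val r) * indic [set enum_val r] s).
  apply/boolp.funext => s; rewrite sum_at /indic /M !inE negb_or.
  case: (boolP (s \in H)) => sH; first by rewrite y1 // mul0r addr0.
  case: (boolP (s \in L)) => sL;
    by rewrite /= ?(y0 _ sL) ?mulr0n ?mulr1n ?mulr0 ?mul1r ?add0r.
by rewrite {1}yE projD proj_sum.
Qed.

Lemma has_affdim_proj_face H L : H != finset.set0 -> [disjoint H & L]%B ->
  has_affdim (proj_face H L) #|~: (H :|: L)|.
Proof.
move=> /set0Pn [p0 p0H] dHL; split.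
  apply: (proj_face_aff_indep (q := enum_val) (p0 := p0) dHL enum_val_inj) => r.
    by apply: contraTneq (enum_valP r) => ->; rewrite !inE p0H.
  by have := enum_valP r; rewrite inE.
apply: (no_aff_indep_in_span (x := proj (indic H))
          (b := fun r => proj (indic [set enum_val r]))) => // _ [y yF <-].
by exists (fun r => y (enum_val r)); exact: proj_face_span.
Qed.

Lemma has_affdim_proj_cube : has_affdim (@proj R g @` cube) g.
Proof.
split; last by move=> [p [_ /aff_indep_leq]]; rewrite ltnn.
rewrite -cube_face0.
apply: (proj_face_aff_indep (q := lift ord0) (p0 := ord0)) => [||r|r].
- by apply/pred0P => s; rewrite /= !inE.
- exact: lift_inj.
- by rewrite eq_sym neq_lift.
- by rewrite !inE.
Qed.

End ProjFaceDimension.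

Section Vertices.
Variables (R : realType) (g : nat).
Hypothesis g_gt0 : (0 < g)%N.

Lemma vertices_proj_cube : vertices (@proj R g @` cube) =
  (fun H => proj (indic H)) @` [set` nontrivial_subsets [set: 'I_g.+1]%SET].
Proof.
have dim_v (v : 'cV[R]_g) k : has_affdim [set v] k -> 0%N = k.
  exact: has_affdim_uniq (has_affdim_set1 v).
apply/seteqP; split=> [v /is_face_proj_cube_cases [vP|[H [L [HN LN dHL vE]]]] | _ [H HT <-]].
- by move: (dim_v v g); rewrite vP => /(_ (has_affdim_proj_cube R g)); lia.
- have /dim_v/esym/cards0_eq freeE : has_affdim [set v] #|~: (H :|: L)|.
    by rewrite vE; exact: has_affdim_proj_face HN dHL.
  have LE : L = ~: H.
    apply/setP => p; rewrite inE; case pH: (p \in H); first exact: disjointFr dHL pH.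
    by move/setP/(_ p): freeE; rewrite !inE pH => /negbFE /= ->.
  exists H; first by rewrite /= inE finset.subsetT HN finset.setTD -LE LN.
  by have : [set v] v by []; rewrite vE LE proj_face_compl => ->.
- rewrite /vertices /= -proj_face_compl.
  move: HT; rewrite /= inE finset.subsetT finset.setTD.
  by move=> /and3P [_ HN HCN]; apply: is_face_proj_cube_face (disjoint_compl H).
Qed.

Lemma proj_indic_inj :
  {in nontrivial_subsets [set: 'I_g.+1]%SET &, injective (fun H => @proj R g (indic H))}.
Proof.
move=> H H' /nontrivial_subsetsP [HN HCN _ _] /nontrivial_subsetsP [H'N H'CN _ _] E.
rewrite !finset.setTD in HCN H'CN.
have := proj_face_inj (R := R) HN HCN H'N H'CN (disjoint_compl H) (disjoint_compl H').
by rewrite !proj_face_compl /= E => /(_ erefl) [].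
Qed.

End Vertices.

Section Brackets.
Variables (R : realType) (g : nat).
Implicit Types (H : {set 'I_g.+1}) (v : 'cV[R]_g).

Lemma proj_indicE H i :
  @proj R g (indic H) i 0 = #|H|%:R / g.+1%:R - indic H (lift ord0 i).
Proof. by rewrite mxE /mean sum_indic. Qed.

Lemma bracket_proj_indic H : H \in nontrivial_subsets [set: 'I_g.+1]%SET ->
  @bracket R g (g.+1 - #|H|) (proj (indic H)).
Proof.
rewrite nontrivial_subsetsT card_ord => /andP [H0 Hn].
have kE : (g.+1 - (g.+1 - #|H|) = #|H|)%N by lia.
have loE : - ((g.+1 - #|H|)%:R / g.+1%:R) = #|H|%:R / g.+1%:R - 1 :> R.
  by rewrite natrB 1?ltnW //; field; rewrite addrC natr1 pnatr_eq0.
rewrite /bracket kE loE; split.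
  by move=> i; rewrite proj_indicE /indic; case: (_ \in H); [left|right]; rewrite ?subr0.
have -> : #|[set i | proj (indic H) i 0 == #|H|%:R / g.+1%:R :> R]| =
          #|[set i : 'I_g | lift ord0 i \notin H]%SET|.
  rewrite card_mkset; apply: eq_card => i; rewrite !inE proj_indicE /indic.
  by case: (_ \in H); rewrite /= ?subr0 ?eqxx ?subr1_neq.
have := card_ord_recl (fun p => p \notin H).
have -> : #|[set p | p \notin H]%SET| = (g.+1 - #|H|)%N.
  by rewrite -[#|[set _ | _]%SET|]/#|~: H| cardsCs finset.setCK card_ord.
by case: (ord0 \in H) => /=; [left | right]; lia.
Qed.

Lemma bracket_proj_indic_inv k v : (1 <= k <= g)%N -> @bracket R g k v ->
  exists2 H, H \in nontrivial_subsets [set: 'I_g.+1]%SET & v = proj (indic H).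
Proof.
move=> /andP [k1 kg] [vE vcnt].
set hi := ((g.+1 - k)%:R / g.+1%:R : R) in vE vcnt.
have loE : - (k%:R / g.+1%:R) = hi - 1.
  by rewrite /hi natrB; [field; rewrite addrC natr1 pnatr_eq0 | lia].
rewrite card_mkset in vcnt; set c := #|[set i | v i 0 == hi]%SET| in vcnt.
pose H := [set p | if unlift ord0 p is Some i then v i 0 != hi else c == k]%SET.
have cg : (c <= g)%N by rewrite -[g in (_ <= g)%N]card_ord max_card.
have HE : #|H| = (g.+1 - k)%N.
  rewrite card_ord_recl unlift_none.
  have -> : #|[set i : 'I_g | if unlift ord0 (lift ord0 i) is Some i then v i 0 != hi
                              else c == k]%SET| = (g - c)%N.
    rewrite (eq_card (B := ~: [set i | v i 0 == hi]%SET)) => [|i]; last first.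
      by rewrite !inE liftK.
    by rewrite cardsCs finset.setCK card_ord.
  case: vcnt => ->; rewrite ?eqxx //=; first lia.
  by rewrite (_ : (k.-1 == k) = false) /=; lia.
exists H; first by rewrite nontrivial_subsetsT card_ord HE; lia.
apply/matrixP => i j; rewrite ord1 proj_indicE HE -/hi /indic inE liftK.
case: (vE i) => ->; last by rewrite eqxx subr0.
by rewrite loE subr1_neq.
Qed.

Lemma bigcup_bracket :
  \bigcup_(k in [set k : nat | (1 <= k <= g)%N]) @bracket R g k =
  (fun H => proj (indic H)) @` [set` nontrivial_subsets [set: 'I_g.+1]%SET].
Proof.
apply/seteqP; split=> [v [k /= kg /bracket_proj_indic_inv] | _ [H HT <-]].
  by case/(_ kg) => H HT ->; exists H.
exists (g.+1 - #|H|)%N; last exact: bracket_proj_indic.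
move: HT; rewrite /= nontrivial_subsetsT card_ord => /andP [h0 hn].
by set h := #|H| in h0 hn *; lia.
Qed.

End Brackets.

Section FacesOfDimension.
Variables (R : realType) (g : nat).

Local Notation proj_face H L := (@proj R g @` cube_face H L).
(* An index x in face_index lists the free coordinates x.1 and the coordinates
   x.2 fixed to 1; all the others are fixed to 0. *)
Local Notation face_of x := (proj_face x.2 (~: x.1 :\: x.2)).

Lemma face_index_inj l :
  {in face_index 'I_g.+1 l &, injective (fun x => face_of x)}.
Proof.
move=> [M H] [M' H']; rewrite !in_face_index /= => /andP [_ HM] /andP [_ HM'] E.
have [HN LN dHL HL] := nontrivial_subsetsP HM.
have [HN' LN' dHL' HL'] := nontrivial_subsetsP HM'.
have [HH' LE] := proj_face_inj HN LN HN' LN' dHL dHL' E; subst H'.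
by congr (_, _); rewrite -[M]finset.setCK -[M']finset.setCK -HL -HL' LE.
Qed.

Lemma faces_proj_cube l : (l < g)%N ->
  [set F | is_face (@proj R g @` cube) F /\ has_affdim F l] =
  (fun x => face_of x) @` [set` face_index 'I_g.+1 l].
Proof.
move=> lg; apply/seteqP; split=> [F [/is_face_proj_cube_cases FE Fl] | _ [[M H] xl <-]].
  case: FE => [FP|[H [L [HN LN dHL FE]]]].
    by move: Fl; rewrite FP => /(has_affdim_uniq (has_affdim_proj_cube R g)); lia.
  have Ml : #|~: (H :|: L)| = l.
    by apply: has_affdim_uniq (has_affdim_proj_face R HN dHL) _; rewrite -FE.
  have LE : (H :|: L) :\: H = L.
    apply/setP => p; rewrite !inE; case pH: (p \in H) => //=.
    by rewrite (disjointFr dHL pH).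
  exists (~: (H :|: L), H); last by rewrite /= finset.setCK LE FE.
  by rewrite /= in_face_index /= Ml eqxx finset.setCK inE finset.subsetUl HN LE LN.
move: xl; rewrite /= in_face_index => /andP [/eqP Ml HM].
have [HN LN dHL HL] := nontrivial_subsetsP HM.
split=> /=; first exact: is_face_proj_cube_face.
by have := has_affdim_proj_face R HN dHL; rewrite HL finset.setCK Ml.
Qed.

End FacesOfDimension.

Theorem theorem3p1 (R : realType) (g : nat) (hg : (1 <= g)%N) :
  has_affdim (voronoi (banana_Q R g)) g /\
  vertices (voronoi (banana_Q R g)) =
    \bigcup_(k in [set k : nat | (1 <= k <= g)%N]) @bracket R g k /\
  (exists f : 'I_(2 * (2 ^ g - 1)) -> 'cV[R]_g,
     injective f /\ range f = vertices (voronoi (banana_Q R g))) /\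
  (forall l : nat, (l <= g - 1)%N ->
     exists f : 'I_('C(g.+1, l) * (2 ^ (g.+1 - l) - 2)) -> set 'cV[R]_g,
       injective f /\
       range f = [set F | is_face (voronoi (banana_Q R g)) F /\ has_affdim F l]).
Proof.
rewrite voronoi_proj_cube (vertices_proj_cube R hg).
split; first exact: has_affdim_proj_cube.
split; first by rewrite bigcup_bracket.
split.
  apply: enum_image; last exact: proj_indic_inj.
  rewrite card_nontrivial_subsets ?cardsT ?card_ord ?expnS ?mulnBr //.
  by apply/set0Pn; exists ord0; rewrite inE.
move=> l lg; rewrite faces_proj_cube; last lia.
by apply: enum_image; [rewrite card_face_index card_ord; lia | exact: face_index_inj].
Qed.
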